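(* Let $S$ be a Polish space and $(X_n),(Y_n)$ sequences of $S$-valued random variables with $X_n//_*Y_n\to1$. Then: (a) if $Y_n\xrightarrow{(d)}Y$, then $X_n\xrightarrow{(d)}Y$; (b) if $(g_n)$ is a sequence of continuous functions from $S$ into a Polish space $S'$, then $g_n(X_n)//_*g_n(Y_n)\to1$.
   Context: $\mathbb{P}_X$ denotes the law of $X$. Write $X_n//_*Y_n\to1$ if for every $\varepsilon>0$ there exist measurable sets $A_n^\varepsilon\subset S$ and measurable functions $f_n^\varepsilon:A_n^\varepsilon\to\mathbb{R}$ with $\mathbb{P}_{X_n}=f_n^\varepsilon\mathbb{P}_{Y_n}$ on $A_n^\varepsilon$ (i.e. $\mathbb{P}_{X_n}(B)=\int_Bf_n^\varepsilon d\mathbb{P}_{Y_n}$ for Borel $B\subset A_n^\varepsilon$), such that $\sup_{x\in A_n^\varepsilon}|f_n^\varepsilon(x)-1|\to0$ as $n\to\infty$ and $\mathbb{P}_{Y_n}(A_n^\varepsilon)\ge1-\varepsilon$ for $n$ large enough. *)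

From HB Require Import structures.
From mathcomp Require Import all_boot all_order all_algebra.
From mathcomp Require Import all_classical all_reals all_analysis.
Set Implicit Arguments. Unset Strict Implicit. Unset Printing Implicit Defensive.
Import Order.TTheory GRing.Theory Num.Theory.
Import numFieldNormedType.Exports.
Local Open Scope classical_set_scope.
Local Open Scope ring_scope.

Definition borel (T : ptopologicalType) : measurableType _ :=
  g_sigma_algebraType (@open T).

Definition separable_space (T : topologicalType) : Prop :=
  exists D : set T, countable D /\ closure D = setT.

Definition completely_metrizable (R : realType) (T : topologicalType) : Prop :=
  exists dist : T -> T -> R,
    [/\ (forall x y, 0 <= dist x y) /\
        (forall x y, dist x y = 0 <-> x = y),
        (forall x y, dist x y = dist y x),
        (forall x y z, dist x z <= dist x y + dist y z),
        (forall A : set T, open A <->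
           (forall x, A x -> exists2 e : R, 0 < e & [set y | dist x y < e] `<=` A))
      &
        (forall u : nat -> T,
           (forall e : R, 0 < e -> exists N, forall m n, (N <= m)%N -> (N <= n)%N ->
              dist (u m) (u n) < e) ->
           exists l : T, forall e : R, 0 < e -> exists N, forall n, (N <= n)%N ->
              dist (u n) l < e)].

Definition polish (R : realType) (T : topologicalType) : Prop :=
  separable_space T /\ completely_metrizable R T.

Definition law d (Omega : measurableType d) dS (S : measurableType dS)
  (R : realType) (P : probability Omega R) (X : Omega -> S) : set S -> \bar R :=
  pushforward P X.

(* X_n //_* Y_n -> 1, stated for the laws mu n = P_{X_n}, nu n = P_{Y_n}. *)
Definition dens_close_to_one dS (S : measurableType dS) (R : realType)
  (mu nu : nat -> set S -> \bar R) : Prop :=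
  forall eps : R, 0 < eps ->
    exists (A : nat -> set S) (f : nat -> S -> R),
      [/\ (forall n, measurable (A n)),
          (forall n, measurable_fun (A n) (f n)),
          (forall n (B : set S), measurable B -> B `<=` A n ->
              mu n B = (\int[nu n]_(x in B) (f n x)%:E)%E),
          (forall delta : R, 0 < delta ->
              \forall n \near \oo, forall x, A n x -> `|f n x - 1| <= delta)
        & (\forall n \near \oo, ((1 - eps)%:E <= nu n (A n))%E)].

Definition cvg_distr (R : realType) (S : ptopologicalType)
  d1 (Om1 : measurableType d1) (P1 : probability Om1 R) (Z : nat -> Om1 -> borel S)
  d2 (Om2 : measurableType d2) (P2 : probability Om2 R) (Z0 : Om2 -> borel S) : Prop :=
  forall h : S -> R, continuous h -> (exists M : R, forall x, `|h x| <= M) ->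
    (fun n => (\int[P1]_w (h (Z n w))%:E)%E) @ \oo --> (\int[P2]_w (h (Z0 w))%:E)%E.

From HB Require Import structures.
From mathcomp Require Import all_boot all_order all_algebra.
From mathcomp Require Import all_classical all_reals all_analysis.
From mathcomp Require Import measurable_realfun ring lra.
Import Order.TTheory GRing.Theory Num.Theory.
Import numFieldNormedType.Exports.
Set Implicit Arguments. Unset Strict Implicit. Unset Printing Implicit Defensive.
Local Open Scope classical_set_scope.
Local Open Scope ring_scope.

(* Both parts reduce to the total variation distance tv_n between the laws of
   X_n and Y_n.  The hypothesis X_n //_* Y_n -> 1 is equivalent to tv_n -> 0:
   a density within dl of 1 on a set of mass >= 1 - eps gives
   tv_n <= eps + 2 dl; conversely, writing both laws as p.lam and q.lam with
   lam their sum, the ratio p/q is a density on the set where it is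
   dl-close to 1, and this set misses at most 2 tv_n / dl of the mass, so
   dl_n = sqrt(tv_n + 1/(n+1)) works.  Then (a) holds because
   |E h(X_n) - E h(Y_n)| <= 2 sup|h| tv_n, and (b) because pushing both laws
   forward along g_n does not increase their total variation distance. *)

Lemma measurable_inv (R : realType) : measurable_fun setT (@GRing.inv R).
Proof.
rewrite -(setUv [set (0:R)]); apply/measurable_funU => //; first exact: measurableC.
split.
  move=> _ Y mY; have [Y0|Y0] := pselect (Y (0:R)^-1).
    by rewrite (_ : _ `&` _ = [set 0]) //; apply/seteqP; split => [x [-> _]|x ->].
  by rewrite (_ : _ `&` _ = set0) //; apply/seteqP; split => [x [-> /= ?]|x].
apply: open_continuous_measurable_fun.
  exact/closed_openC/accessible_closed_set1/hausdorff_accessible/Rhausdorff.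
by move=> x; rewrite inE => /eqP x0; exact: inv_continuous.
Qed.

Section measurable_comparison.
Context d (T : measurableType d) (R : realType).
Variables (f g : T -> R).
Hypotheses (mf : measurable_fun setT f) (mg : measurable_fun setT g).

Lemma measurable_ltr_set : measurable [set x | f x < g x].
Proof.
by have := measurable_fun_ltr mf mg measurableT (Y := [set true]) I; rewrite setTI.
Qed.

Lemma measurable_ler_set : measurable [set x | f x <= g x].
Proof.
by have := measurable_fun_ler mf mg measurableT (Y := [set true]) I; rewrite setTI.
Qed.

End measurable_comparison.

Section total_variation.
Context d (T : measurableType d) (R : realType).
Implicit Types (mu nu : probability T R) (B : set T).
Local Open Scope ereal_scope.

Definition tv_dist mu nu : R :=
  fine (ereal_sup [set mu B - nu B | B in measurable]).

Lemma tv_dist_supE mu nu :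
  ereal_sup [set mu B - nu B | B in measurable] = (tv_dist mu nu)%:E.
Proof.
rewrite /tv_dist fineK // ge0_fin_numE.
  apply: (@le_lt_trans _ _ 1); last exact: ltry.
  apply: ge_ereal_sup => _ [B mB <-].
  rewrite leeBlDl ?fin_num_measure //.
  exact: le_trans (probability_le1 mu mB) (leeDr _ (measure_ge0 nu B)).
apply: ereal_sup_ubound; exists set0 => //.
by rewrite !measure0 sube0.
Qed.

Lemma tv_dist_ge0 mu nu : (0 <= tv_dist mu nu)%R.
Proof.
rewrite -lee_fin -tv_dist_supE; apply: ereal_sup_ubound; exists set0 => //.
by rewrite !measure0 sube0.
Qed.

Lemma le_tv_dist mu nu B : measurable B -> mu B <= nu B + (tv_dist mu nu)%:E.
Proof.
move=> mB; rewrite -tv_dist_supE -leeBlDl ?fin_num_measure //.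
by apply: ereal_sup_ubound; exists B.
Qed.

Lemma tv_dist_le mu nu (e : R) :
  (forall B, measurable B -> mu B <= nu B + e%:E) -> (tv_dist mu nu <= e)%R.
Proof.
move=> le_mu; rewrite -lee_fin -tv_dist_supE; apply: ge_ereal_sup => _ [B mB <-].
by rewrite leeBlDl ?fin_num_measure // le_mu.
Qed.

Lemma tv_distC mu nu : tv_dist mu nu = tv_dist nu mu.
Proof.
suff le_tvC mu' nu' : (tv_dist mu' nu' <= tv_dist nu' mu')%R.
  by apply/le_anti; rewrite !le_tvC.
apply: tv_dist_le => B mB; have := le_tv_dist nu' mu' (measurableC mB).
rewrite !probability_setC //.
rewrite -[mu' B]fineK ?fin_num_measure // -[nu' B]fineK ?fin_num_measure //.
by rewrite -!EFinB -EFinD !lee_fin; lra.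
Qed.

End total_variation.

Section ge0_integral_EFin.
Context d (T : measurableType d) (R : realType).
Variables (m : {measure set T -> \bar R}) (E : set T).
Hypothesis mE : measurable E.
Implicit Types f g : T -> R.
Local Open Scope ereal_scope.

Lemma ge0_le_integral_EFin f g : measurable_fun E f -> measurable_fun E g ->
  (forall x, E x -> 0 <= f x)%R -> (forall x, E x -> f x <= g x)%R ->
  \int[m]_(x in E) (f x)%:E <= \int[m]_(x in E) (g x)%:E.
Proof.
by move=> mf mg f0 fg; apply: ge0_le_integral => //; exact/measurable_EFinP.
Qed.

Lemma ge0_integralZl_EFinr (k : R) f : measurable_fun E f ->
  (0 <= k)%R -> (forall x, E x -> 0 <= f x)%R ->
  \int[m]_(x in E) (k * f x)%:E = k%:E * \int[m]_(x in E) (f x)%:E.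
Proof.
move=> mf k0 f0; under eq_integral do rewrite EFinM.
by apply: ge0_integralZl => //; exact/measurable_EFinP.
Qed.

Lemma ge0_integralD_EFinr f g : measurable_fun E f -> measurable_fun E g ->
  (forall x, E x -> 0 <= f x)%R -> (forall x, E x -> 0 <= g x)%R ->
  \int[m]_(x in E) (f x + g x)%:E =
  \int[m]_(x in E) (f x)%:E + \int[m]_(x in E) (g x)%:E.
Proof.
move=> mf mg f0 g0; under eq_integral do rewrite EFinD.
by apply: ge0_integralD => //; exact/measurable_EFinP.
Qed.

Lemma ge0_integral_EFin_setUC f A : measurable A -> measurable_fun setT f ->
  (forall x, 0 <= f x)%R ->
  \int[m]_x (f x)%:E = \int[m]_(x in A) (f x)%:E + \int[m]_(x in ~` A) (f x)%:E.
Proof.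
move=> mA mf f0; rewrite -ge0_integral_setU ?setUv //; first exact: measurableC.
- exact/measurable_EFinP.
- by move=> x _; rewrite lee_fin.
- by apply/disj_setPLR; rewrite setCK.
Qed.

End ge0_integral_EFin.

Section real_density.
Context d (T : measurableType d) (R : realType).
Variables (m lam : {finite_measure set T -> \bar R}).
Hypothesis m_lam : m `<< lam.
Local Notation f := (Radon_Nikodym_SigmaFinite.f m lam).

Definition rn_density x : R := fine (f x).

Lemma rn_densityE x : (rn_density x)%:E = f x.
Proof. by rewrite fineK // Radon_Nikodym_SigmaFinite.f_fin_num. Qed.

Lemma rn_density_ge0 x : 0 <= rn_density x.
Proof. by rewrite -lee_fin rn_densityE Radon_Nikodym_SigmaFinite.f_ge0. Qed.

Lemma measurable_rn_density : measurable_fun setT rn_density.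
Proof.
apply/measurable_EFinP; rewrite (_ : _ \o _ = f); last first.
  by apply/funext => x; rewrite /= rn_densityE.
exact: measurable_int (Radon_Nikodym_SigmaFinite.f_integrable m_lam).
Qed.

Lemma measure_rn_density A : measurable A ->
  m A = (\int[lam]_(x in A) (rn_density x)%:E)%E.
Proof.
move=> mA; rewrite (Radon_Nikodym_SigmaFinite.f_integral m_lam) //.
by apply: eq_integral => x _; rewrite rn_densityE.
Qed.

Lemma ge0_integral_rn_density (k : T -> R) E : measurable E -> measurable_fun E k ->
  (forall x, 0 <= k x) ->
  (\int[m]_(x in E) (k x)%:E = \int[lam]_(x in E) (k x * rn_density x)%:E)%E.
Proof.
move=> mE mk k0; rewrite -(Radon_Nikodym_SigmaFinite.change_of_variables m_lam) //.
  by apply: eq_integral => x _; rewrite EFinM rn_densityE.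
exact/measurable_EFinP.
Qed.

End real_density.

Section densities.
Context d (T : measurableType d) (R : realType).
Variables mu nu : probability T R.
Local Notation tv := (tv_dist mu nu).

Definition sum_measure := measure_add mu nu.
HB.instance Definition _ := Measure.on sum_measure.

Let sum_measure_fin : fin_num_fun sum_measure.
Proof. by move=> A mA; rewrite /sum_measure measure_addE fin_numD !fin_num_measure. Qed.

HB.instance Definition _ := @Measure_isFinite.Build _ T R sum_measure sum_measure_fin.

Let mu_sum : mu `<< sum_measure.
Proof.
move=> N sN A mA AN; have /eqP := sN A mA AN.
by rewrite /sum_measure measure_addE padde_eq0 ?measure_ge0 // => /andP[/eqP].
Qed.

Let nu_sum : nu `<< sum_measure.
Proof.
move=> N sN A mA AN; have /eqP := sN A mA AN.
by rewrite /sum_measure measure_addE padde_eq0 ?measure_ge0 // => /andP[_ /eqP].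
Qed.

Local Notation p := (rn_density mu sum_measure).
Local Notation q := (rn_density nu sum_measure).

Let mp := measurable_rn_density mu_sum.
Let mq := measurable_rn_density nu_sum.
Let p_ge0 := rn_density_ge0 mu_sum.
Let q_ge0 := rn_density_ge0 nu_sum.

Lemma le_integral_tv_dist_ge0 (K : R) (k : T -> R) : 0 <= K ->
  measurable_fun setT k -> (forall x, 0 <= k x <= K) ->
  (\int[mu]_x (k x)%:E <= \int[nu]_x (k x)%:E + (K * tv)%:E)%E.
Proof.
move=> K0 mk kK; have k0 x : 0 <= k x by case/andP: (kK x).
pose B := [set x | q x < p x]; have mB : measurable B by exact: measurable_ltr_set.
have mkp : measurable_fun setT (fun x => k x * p x) := measurable_funM mk mp.
have mkq : measurable_fun setT (fun x => k x * q x) := measurable_funM mk mq.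
have kp0 x : 0 <= k x * p x by rewrite mulr_ge0.
have kq0 x : 0 <= k x * q x by rewrite mulr_ge0.
rewrite (ge0_integral_rn_density mu_sum measurableT mk) //.
rewrite (ge0_integral_rn_density nu_sum measurableT mk) //.
rewrite !(ge0_integral_EFin_setUC _ mB) //.
(* off [B] the [mu]-integrand is the smaller one; on [B] replacing [k] by [K]
   only increases the gap, which is then bounded by [K (mu B - nu B)] *)
have le_Bc : (\int[sum_measure]_(x in ~` B) (k x * p x)%:E <=
              \int[sum_measure]_(x in ~` B) (k x * q x)%:E)%E.
  apply: ge0_le_integral_EFin; [exact: measurableC|exact: measurable_funTS..|by []|].
  by move=> x /negP; rewrite -leNgt => qp; rewrite ler_wpM2l.
have mKp : measurable_fun setT (fun x => K * p x).
  exact: measurable_funM (measurable_cst K) mp.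
have mKq : measurable_fun setT (fun x => K * q x).
  exact: measurable_funM (measurable_cst K) mq.
have Kp0 x : 0 <= K * p x by rewrite mulr_ge0.
have Kq0 x : 0 <= K * q x by rewrite mulr_ge0.
have le_B : (\int[sum_measure]_(x in B) (k x * p x)%:E + K%:E * nu B <=
             \int[sum_measure]_(x in B) (k x * q x)%:E + K%:E * mu B)%E.
  rewrite (measure_rn_density nu_sum mB) (measure_rn_density mu_sum mB).
  rewrite -(ge0_integralZl_EFinr _ mB (measurable_funTS mp) K0 (fun x _ => p_ge0 x)).
  rewrite -(ge0_integralZl_EFinr _ mB (measurable_funTS mq) K0 (fun x _ => q_ge0 x)).
  rewrite -(ge0_integralD_EFinr _ mB (measurable_funTS mkp) (measurable_funTS mKq)
    (fun x _ => kp0 x) (fun x _ => Kq0 x)).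
  rewrite -(ge0_integralD_EFinr _ mB (measurable_funTS mkq) (measurable_funTS mKp)
    (fun x _ => kq0 x) (fun x _ => Kp0 x)).
  apply: ge0_le_integral_EFin => //.
  - by apply: measurable_funD; exact: measurable_funTS.
  - by apply: measurable_funD; exact: measurable_funTS.
  - by move=> x _; rewrite addr_ge0.
  - move=> x Bx; have /andP[_ kxK] := kK x; rewrite -subr_ge0.
    have -> : k x * q x + K * p x - (k x * p x + K * q x) = (K - k x) * (p x - q x).
      by ring.
    by rewrite mulr_ge0 // subr_ge0 // ltW.
have le_tv : (K%:E * mu B <= K%:E * nu B + (K * tv)%:E)%E.
  rewrite EFinM -muleDr ?fin_num_adde_defl //.
  by apply: lee_wpmul2l; [rewrite lee_fin|exact: le_tv_dist].
have nuB_fin : (K%:E * nu B)%E \is a fin_num by rewrite fin_numM // fin_num_measure.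
have le_B' : (\int[sum_measure]_(x in B) (k x * p x)%:E <=
              \int[sum_measure]_(x in B) (k x * q x)%:E + (K * tv)%:E)%E.
  rewrite -(leeD2rE _ _ nuB_fin); apply: (le_trans le_B).
  move: (\int[sum_measure]_(x in B) _)%E => I.
  by rewrite -addeA; apply: leeD => //; rewrite addeC.
by rewrite addeAC leeD.
Qed.

Definition density_ratio x := p x / q x.

Lemma density_ratio_ge0 x : 0 <= density_ratio x.
Proof. by rewrite divr_ge0. Qed.

Lemma measurable_density_ratio : measurable_fun setT density_ratio.
Proof. exact: measurable_funM mp (measurableT_comp (@measurable_inv R) mq). Qed.

Definition ratio_set (dl : R) := [set x | 0 < q x] `&`
  [set x | (1 - dl) * q x <= p x] `&` [set x | p x <= (1 + dl) * q x].

Lemma measurable_ratio_set dl : measurable (ratio_set dl).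
Proof.
have mcq (c : R) : measurable_fun setT (fun x => c * q x).
  exact: measurable_funM (measurable_cst c) mq.
apply: measurableI; first apply: measurableI.
- exact: measurable_ltr_set.
- exact: measurable_ler_set.
- exact: measurable_ler_set.
Qed.

Lemma ratio_set_density dl B : measurable B -> B `<=` ratio_set dl ->
  mu B = (\int[nu]_(x in B) (density_ratio x)%:E)%E.
Proof.
move=> mB sB; rewrite (ge0_integral_rn_density nu_sum mB) //; last 2 first.
- exact: measurable_funTS measurable_density_ratio.
- exact: density_ratio_ge0.
rewrite (measure_rn_density mu_sum mB); apply: eq_integral => x /[!inE] Bx.
have [[q0 _] _] := sB x Bx.
by rewrite /density_ratio divfK // gt_eqF.
Qed.

Lemma ratio_set_close dl x : ratio_set dl x -> `|density_ratio x - 1| <= dl.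
Proof.
move=> [[/= q0 lower] /= upper].
have -> : density_ratio x - 1 = (p x - q x) / q x.
  by rewrite /density_ratio mulrBl divff // gt_eqF.
rewrite normrM normfV (gtr0_norm q0) ler_pdivrMr // ler_norml.
by apply/andP; split; lra.
Qed.

Lemma ratio_set_compl_le dl : 0 < dl <= 1 -> tv <= dl ^+ 2 ->
  (nu (~` ratio_set dl) <= (2 * dl)%:E)%E.
Proof.
move=> /andP[dl0 dl1] tv_dl.
pose C0 := [set x | q x <= 0].
pose C1 := [set x | p x < (1 - dl) * q x].
pose C2 := [set x | (1 + dl) * q x < p x].
have mcq (c : R) : measurable_fun setT (fun x => c * q x).
  exact: measurable_funM (measurable_cst c) mq.
have mC0 : measurable C0 by exact: measurable_ler_set.
have mC1 : measurable C1 by exact: measurable_ltr_set.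
have mC2 : measurable C2 by exact: measurable_ltr_set.
have sub : ~` ratio_set dl `<=` C0 `|` C1 `|` C2.
  move=> x nA; rewrite /C0 /C1 /C2 /=.
  have [q0|q0] := leP (q x) 0; first by left; left.
  have [h1|h1] := ltP (p x) ((1 - dl) * q x); first by left; right.
  have [h2|h2] := ltP ((1 + dl) * q x) (p x); first by right.
  by exfalso; apply: nA; split; [split|].
have nuC0 : nu C0 = 0%E.
  rewrite (measure_rn_density nu_sum mC0) (eq_integral (fun _ => 0%E)) ?integral0 //.
  by move=> x /[!inE] /= qx0; rewrite (@le_anti _ _ (q x) 0) // qx0 q_ge0.
(* on [C1] and [C2] the ratio is [dl]-far from [1],
   so [dl nu(C) <= |mu(C) - nu(C)| <= tv <= dl ^+ 2] *)
have nuC1 : fine (nu C1) <= dl.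
  have : (mu C1 <= ((1 - dl) * fine (nu C1))%:E)%E.
    rewrite (measure_rn_density mu_sum mC1) EFinM fineK ?fin_num_measure //.
    rewrite (measure_rn_density nu_sum mC1) -(ge0_integralZl_EFinr _ mC1
      (measurable_funTS mq) _ (fun x _ => q_ge0 x)); last by rewrite subr_ge0.
    apply: ge0_le_integral_EFin => //; try exact: measurable_funTS.
    by move=> x /ltW.
  have := le_tv_dist nu mu mC1; rewrite -tv_distC.
  rewrite -[nu C1]fineK ?fin_num_measure // -[mu C1]fineK ?fin_num_measure //.
  rewrite -EFinD !lee_fin /= => le_nu le_mu.
  by rewrite -(ler_pM2l dl0); nra.
have nuC2 : fine (nu C2) <= dl.
  have : (((1 + dl) * fine (nu C2))%:E <= mu C2)%E.
    rewrite (measure_rn_density mu_sum mC2) EFinM fineK ?fin_num_measure //.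
    rewrite (measure_rn_density nu_sum mC2) -(ge0_integralZl_EFinr _ mC2
      (measurable_funTS mq) _ (fun x _ => q_ge0 x)); last by rewrite addr_ge0 // ltW.
    apply: ge0_le_integral_EFin => //; try exact: measurable_funTS.
    - by move=> x _; rewrite mulr_ge0 // addr_ge0 // ltW.
    - by move=> x /ltW.
  have := le_tv_dist mu nu mC2.
  rewrite -[nu C2]fineK ?fin_num_measure // -[mu C2]fineK ?fin_num_measure //.
  rewrite -EFinD !lee_fin /= => le_mu le_nu.
  by rewrite -(ler_pM2l dl0); nra.
apply: (le_trans (le_measure _ _ _ sub)); rewrite ?inE //.
- exact: measurableC (measurable_ratio_set dl).
- by apply: measurableU => //; exact: measurableU.
apply: (le_trans (measureU2 _ _ _)) => //; first exact: measurableU.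
apply: (le_trans (leeD (measureU2 _ mC0 mC1) (lexx _))).
rewrite [X in (X + _ + _)%E]nuC0 add0e.
rewrite -[X in (X + _ <= _)%E]fineK ?fin_num_measure //.
rewrite -[X in (_ + X <= _)%E]fineK ?fin_num_measure //.
by rewrite -EFinD lee_fin; lra.
Qed.

End densities.

Section tv_dist_density.
Context d (T : measurableType d) (R : realType).

Lemma tv_dist_le_of_density (mu nu : probability T R) (A : set T) (f : T -> R)
    (dl eps : R) :
  0 <= dl <= 1 -> measurable A -> measurable_fun A f ->
  (forall B, measurable B -> B `<=` A -> mu B = (\int[nu]_(x in B) (f x)%:E)%E) ->
  (forall x, A x -> `|f x - 1| <= dl) -> ((1 - eps)%:E <= nu A)%E ->
  tv_dist mu nu <= eps + 2 * dl.
Proof.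
move=> /andP[dl0 dl1] mA mf muf close nuA; apply: tv_dist_le => B mB.
have mBA : measurable (B `&` A) := measurableI _ _ mB mA.
have f_ge x : A x -> 1 - dl <= f x.
  by move=> /close; rewrite ler_norml => /andP[+ _]; lra.
have f_le x : A x -> f x <= 1 + dl.
  by move=> /close; rewrite ler_norml => /andP[_ +]; lra.
have muBA : (mu (B `&` A) <= ((1 + dl) * fine (nu (B `&` A)))%:E)%E.
  rewrite (muf _ mBA (@subIsetr _ _ _)) EFinM fineK ?fin_num_measure //.
  rewrite -integral_cst //; apply: ge0_le_integral_EFin => //.
  - exact: measurable_funS mA (@subIsetr _ _ _) mf.
  - by move=> x [_ Ax]; apply: le_trans (f_ge x Ax); lra.
  - by move=> x [_ Ax]; exact: f_le.
have muA : (((1 - dl) * fine (nu A))%:E <= mu A)%E.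
  rewrite (muf _ mA (@subset_refl _ _)) EFinM fineK ?fin_num_measure //.
  rewrite -integral_cst //; apply: ge0_le_integral_EFin => //.
  by move=> x _; lra.
have muB : (mu B <= mu (B `&` A) + mu (~` A))%E.
  apply: (le_trans _ (measureU2 _ mBA (measurableC mA))).
  apply: le_measure; rewrite ?inE //; first exact: measurableU (measurableC mA).
  by move=> x Bx; have [Ax|nAx] := pselect (A x); [left|right].
have nuBA : (nu (B `&` A) <= nu B)%E.
  by apply: le_measure; rewrite ?inE //; exact: subIsetl.
have nuB1 := probability_le1 nu mB; have nuA1 := probability_le1 nu mA.
rewrite probability_setC // in muB.
move: muB muBA muA nuBA nuB1 nuA1 nuA.
rewrite -[mu B]fineK ?fin_num_measure // -[nu B]fineK ?fin_num_measure //.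
rewrite -[mu (B `&` A)]fineK ?fin_num_measure // -[mu A]fineK ?fin_num_measure //.
rewrite -[nu (B `&` A)]fineK ?fin_num_measure // -[nu A]fineK ?fin_num_measure //.
rewrite -!EFinD -?EFinB !lee_fin.
have := fine_ge0 (measure_ge0 nu (B `&` A)).
move: (fine (nu (B `&` A))) (fine (nu A)) => a c a0 muB muBA muA a_le nuB1 c1 c_ge.
rewrite /= in muBA muA; nra.
Qed.

Variables mu nu : nat -> probability T R.
Local Notation tv n := (tv_dist (mu n) (nu n)).

Lemma dens_close_to_one_cvg_tv_dist :
  dens_close_to_one (fun n => mu n) (fun n => nu n) -> tv n @[n --> \oo] --> 0.
Proof.
move=> dens; apply/cvgr0Pnorm_le => eps eps0.
have eps30 : 0 < eps / 3 by rewrite divr_gt0.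
pose dl := Order.min (eps / 3) 1.
have dl0 : 0 < dl by rewrite lt_min eps30 ltr01.
have [dl_eps dl1] : dl <= eps / 3 /\ dl <= 1 by split; rewrite ge_min lexx ?orbT.
have [A [f [mA mf muf close big]]] := dens _ eps30.
near=> n; rewrite ger0_norm ?tv_dist_ge0 //.
apply: le_trans
  (tv_dist_le_of_density (dl := dl) (eps := eps / 3) _ (mA n) (mf n) (muf n) _ _) _.
- by rewrite ltW // dl1.
- by near: n; exact: close.
- by near: n; exact: big.
- by lra.
Unshelve. all: by end_near.
Qed.

Lemma cvg_tv_dist_dens_close_to_one :
  tv n @[n --> \oo] --> 0 -> dens_close_to_one (fun n => mu n) (fun n => nu n).
Proof.
move=> tv0 eps eps0.
(* [harmonic n] keeps [dl n] positive when [tv n] vanishes *)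
pose dl n := Num.sqrt (tv n + harmonic n).
have dl_gt0 n : 0 < dl n by rewrite sqrtr_gt0 ltr_wpDl ?tv_dist_ge0 ?harmonic_gt0.
have tv_dl n : tv n <= dl n ^+ 2.
  by rewrite sqr_sqrtr ?addr_ge0 ?tv_dist_ge0 ?harmonic_ge0 // lerDl harmonic_ge0.
have dl_cvg : dl n @[n --> \oo] --> 0.
  rewrite -sqrtr0; apply: (cvg_comp _ _ (cvgD tv0 cvg_harmonic)).
  by rewrite addr0; exact: sqrt_continuous.
have dl_small e : 0 < e -> \forall n \near \oo, dl n <= e.
  move=> e0; apply: filterS ((cvgr0Pnorm_le _).1 dl_cvg e e0) => n.
  by rewrite gtr0_norm.
exists (fun n => ratio_set (mu n) (nu n) (dl n)), (fun n => density_ratio (mu n) (nu n)).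
split.
- by move=> n; exact: measurable_ratio_set.
- by move=> n; exact: measurable_funTS (measurable_density_ratio _ _).
- by move=> n B; exact: ratio_set_density.
- move=> delta delta0; apply: filterS (dl_small _ delta0) => n dln x /ratio_set_close.
  by move/le_trans; apply.
- have eps20 : 0 < Order.min (eps / 2) 1 by rewrite lt_min divr_gt0 // ltr01.
  apply: filterS (dl_small _ eps20) => n; rewrite le_min => /andP[dl_eps dl1].
  have := ratio_set_compl_le (dl := dl n) _ (tv_dl n); rewrite dl_gt0 dl1 => /(_ isT).
  rewrite probability_setC; last exact: measurable_ratio_set.
  have mA := measurable_ratio_set (mu n) (nu n) (dl n).
  set v := nu n _; rewrite -[v]fineK ?fin_num_measure //.
  by rewrite -EFinB !lee_fin; lra.
Qed.

End tv_dist_density.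

Section bounded_integrals.
Context d (T : measurableType d) (R : realType).
Variables (h : T -> R) (M : R).
Hypotheses (mh : measurable_fun setT h) (hM : forall x, `|h x| <= M).

Lemma bounded_integrable (P : probability T R) : P.-integrable setT (EFin \o h).
Proof.
apply: measurable_bounded_integrable => //.
  by rewrite ltey_eq fin_num_measure.
by exists M; split => [|r Mr x _]; rewrite ?num_real //= (le_trans (hM x)) // ltW.
Qed.

Lemma integralDr_cst (P : probability T R) (c : R) :
  (\int[P]_x (h x + c)%:E = \int[P]_x (h x)%:E + c%:E)%E.
Proof.
under eq_integral do rewrite EFinD.
rewrite integralD //.
- by rewrite integral_cst // [X in (_ * X)%E]probability_setT mule1.
- exact: (bounded_integrable P).
- exact: finite_measure_integrable_cst.
Qed.

Lemma le_integral_tv_dist (mu nu : probability T R) :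
  (\int[mu]_x (h x)%:E <= \int[nu]_x (h x)%:E + (2 * M * tv_dist mu nu)%:E)%E.
Proof.
have M0 : 0 <= M by rewrite (le_trans _ (hM point)).
have hM' x : 0 <= h x + M <= 2 * M.
  by have := hM x; rewrite ler_norml => /andP[? ?]; apply/andP; split; lra.
have := le_integral_tv_dist_ge0 mu nu (mulr_ge0 (ler0n _ 2) M0)
  (measurable_funD mh (measurable_cst M)) hM'.
rewrite !integralDr_cst -addeA [(M%:E + _)%E]addeC addeA leeD2rE //.
Qed.

End bounded_integrals.

Lemma cvg_integral_tv_dist d (T : measurableType d) (R : realType)
    (mu nu : nat -> probability T R) (h : T -> R) (M : R) (l : \bar R) :
  measurable_fun setT h -> (forall x, `|h x| <= M) ->
  tv_dist (mu n) (nu n) @[n --> \oo] --> 0 ->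
  (\int[nu n]_x (h x)%:E)%E @[n --> \oo] --> l ->
  (\int[mu n]_x (h x)%:E)%E @[n --> \oo] --> l.
Proof.
move=> mh hM tv0 cvg_nu.
pose c n := 2 * M * tv_dist (mu n) (nu n).
have c0 : (fun n => (c n)%:E) @ \oo --> 0%:E.
  apply: cvg_EFin; first exact: nearW.
  by rewrite -(mulr0 (2 * M)); apply: cvgM => //; exact: cvg_cst.
apply: (@squeeze_cvge _ _ _ _ (fun n => \int[nu n]_x (h x)%:E - (c n)%:E)%E _
  (fun n => \int[nu n]_x (h x)%:E + (c n)%:E)%E).
- apply: nearW => n; rewrite leeBlDr // le_integral_tv_dist // andbT.
  by rewrite /c tv_distC; exact: le_integral_tv_dist.
- rewrite -[l]adde0 -oppe0.
  by apply: (cvgeB _ cvg_nu c0); rewrite oppe0 fin_num_adde_defl.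
- by rewrite -[l]adde0; apply: (cvgeD _ cvg_nu c0); rewrite fin_num_adde_defl.
Qed.

Section law.
Context (R : realType) d (Om : measurableType d) dS (S : measurableType dS).
Variables (P : probability Om R) (X : Om -> S).
Hypothesis mX : measurable_fun setT X.

Definition law_prob : probability S R :=
  distribution P (mfun_Sub (mem_set mX : X \in mfun)).

Lemma integral_law_prob (h : S -> R) (M : R) : measurable_fun setT h ->
  (forall y, `|h y| <= M) ->
  (\int[law_prob]_y (h y)%:E = \int[P]_w (h (X w))%:E)%E.
Proof.
move=> mh hM; rewrite (integral_distribution (f := EFin \o h)) //.
  exact/measurable_EFinP.
exact: bounded_integrable (measurableT_comp mh mX) (fun w => hM (X w)) P.
Qed.

End law.

Lemma tv_dist_law_prob_le (R : realType) d (T : measurableType d)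
    d' (T' : measurableType d') (mu nu : probability T R) (g : T -> T')
    (mg : measurable_fun setT g) :
  tv_dist (law_prob mu mg) (law_prob nu mg) <= tv_dist mu nu.
Proof.
apply: tv_dist_le => B mB; rewrite /= /pushforward.
by apply: le_tv_dist; rewrite -[_ @^-1` _]setTI; exact: mg.
Qed.

Lemma continuous_measurable_borel (S S' : ptopologicalType) (g : S -> S') :
  continuous g -> measurable_fun setT (g : borel S -> borel S').
Proof.
move=> cg; apply: (@measurability _ _ (borel S) (borel S') setT g (@open S')) => //.
move=> _ [A oA <-]; rewrite setTI; apply: sub_sigma_algebra.
exact: open_comp.
Qed.

Lemma continuous_measurable_borelR (R : realType) (S : ptopologicalType) (h : S -> R) :
  continuous h -> measurable_fun setT (h : borel S -> R).
Proof.
move=> ch; apply: (@measurability _ _ (borel S) _ setT h (@RGenOpens.G R)).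
  exact: RGenOpens.measurableE.
move=> _ [_ [a [b ->]] <-]; rewrite setTI; apply: sub_sigma_algebra.
by apply: open_comp => //; exact: interval_open.
Qed.

Theorem lemma16 (R : realType) (S : ptopologicalType)
  (d1 : measure_display) (Om1 : measurableType d1) (P1 : probability Om1 R)
  (d2 : measure_display) (Om2 : measurableType d2) (P2 : probability Om2 R)
  (X : nat -> Om1 -> borel S) (Y : nat -> Om2 -> borel S) :
  polish R S ->
  (forall n, measurable_fun setT (X n)) ->
  (forall n, measurable_fun setT (Y n)) ->
  dens_close_to_one (fun n => law P1 (X n)) (fun n => law P2 (Y n)) ->
  (forall (d3 : measure_display) (Om3 : measurableType d3) (P3 : probability Om3 R)
     (Y0 : Om3 -> borel S), measurable_fun setT Y0 ->
     cvg_distr P2 Y P3 Y0 -> cvg_distr P1 X P3 Y0)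
  /\
  (forall (S' : ptopologicalType) (g : nat -> S -> S'),
     polish R S' -> (forall n, continuous (g n)) ->
     dens_close_to_one
       (fun n => law P1 ((g n : borel S -> borel S') \o X n))
       (fun n => law P2 ((g n : borel S -> borel S') \o Y n))).
Proof.
move=> _ mX mY dens.
pose mu n := law_prob P1 (mX n); pose nu n := law_prob P2 (mY n).
have tv0 : tv_dist (mu n) (nu n) @[n --> \oo] --> 0.
  exact: (@dens_close_to_one_cvg_tv_dist _ _ _ mu nu dens).
split.
- move=> d3 Om3 P3 Y0 mY0 cvgY h ch [M hM].
  have mh := continuous_measurable_borelR ch.
  have lawE d (Om : measurableType d) (Q : probability Om R) (Z : Om -> borel S)
      (mZ : measurable_fun setT Z) :
      (\int[Q]_w (h (Z w))%:E = \int[law_prob Q mZ]_y (h y)%:E)%E.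
    by rewrite (integral_law_prob Q mZ mh hM).
  under eq_fun do rewrite (lawE _ _ _ _ (mX _)).
  apply: (cvg_integral_tv_dist mh hM tv0).
  under eq_fun do rewrite -(lawE _ _ _ _ (mY _)).
  exact: cvgY h ch (ex_intro _ M hM).
- move=> S' g _ cg.
  have mg n := continuous_measurable_borel (cg n).
  apply: (@cvg_tv_dist_dens_close_to_one _ _ _
    (fun n => law_prob (mu n) (mg n)) (fun n => law_prob (nu n) (mg n))).
  apply: (squeeze_cvgr _ (cvg_cst 0) tv0); apply: nearW => n.
  by rewrite tv_dist_ge0 tv_dist_law_prob_le.
Qed.
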